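(* Let $k\ge3$, let $G$ be a connected graph without isolated vertices, and let $u\in V(G)$. Let $G_u\bowtie K_k$ denote the graph obtained from the disjoint union of $G$ and a complete graph $K_k$ by identifying $u$ with a vertex of $K_k$. Then $G\in\mathcal F_{\chi,k}$ if and only if $G_u\bowtie K_k\in\mathcal F_{(k,2)}$.
   Context: All graphs are finite and simple. $\mathcal F_{\chi,k}$ is the class of graphs $G$ with $\chi(G)=k$ such that $\chi(H)<k$ for every proper subgraph $H$ of $G$ (for graphs without isolated vertices this is equivalent to $\chi(G-e)=k-1$ for every edge $e$). For a graph $G$, ${\rm es}_{\chi}(G)$ is the minimum number of edges of $G$ whose removal results in a spanning subgraph $G_1$ with $\chi(G_1)=\chi(G)-1$. $G$ is edge-stability critical if ${\rm es}_{\chi}(G-e)<{\rm es}_{\chi}(G)$ for every edge $e\in E(G)$. $\mathcal F_{(k,2)}$ is the class of $(k,2)$-critical graphs, i.e., edge-stability critical graphs $G$ with $\chi(G)=k$ and ${\rm es}_{\chi}(G)=2$. *)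

(* Finite simple graphs on a finite vertex universe T:
   a vertex set gV and an edge set gE of 2-element subsets of gV. *)
From mathcomp Require Import all_boot.
Set Implicit Arguments. Unset Strict Implicit. Unset Printing Implicit Defensive.

Record graph (T : finType) := Graph { gV : {set T}; gE : {set {set T}} }.

Section Graphs.
Variable T : finType.
Implicit Types G H : graph T.

Definition wf_graph G : Prop :=
  forall e, e \in gE G -> #|e| = 2 /\ e \subset gV G.

Definition subgraph H G : Prop :=
  [/\ gV H \subset gV G, gE H \subset gE G &
      forall e, e \in gE H -> e \subset gV H].

Definition colorable G (c : nat) : bool :=
  [exists f : {ffun T -> 'I_#|T|.+1},
     [forall x in gV G, f x < c] &&
     [forall e in gE G, forall x in e, forall y in e, (x != y) ==> (f x != f y)]].

(* chromatic number: least c such that G is c-colourable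
   (G is always #|T|-colourable, so the minimum ranges over c <= #|T|) *)
Definition chi G : nat := \big[minn/#|T|]_(c < #|T|.+1 | colorable G c) c.

Definition chi_critical (k : nat) G : Prop :=
  chi G = k /\
  forall H, subgraph H G -> (gV H, gE H) <> (gV G, gE G) -> chi H < k.

Definition del_edges G (F : {set {set T}}) : graph T := Graph (gV G) (gE G :\: F).

(* es_chi: least number of edges whose removal lowers chi by one
   (default #|E|+1 if no such set exists; never used in the theorem) *)
Definition es_chi G : nat :=
  \big[minn/#|gE G|.+1]_(F in powerset (gE G) | chi (del_edges G F) == (chi G).-1) #|F|.

Definition es_critical G : Prop :=
  forall e, e \in gE G -> es_chi (del_edges G [set e]) < es_chi G.

Definition k2_critical (k : nat) G : Prop :=
  [/\ es_critical G, chi G = k & es_chi G = 2].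

Definition adj G : rel T := fun x y => [set x; y] \in gE G.

Definition connected G : Prop :=
  forall x y, x \in gV G -> y \in gV G -> connect (adj G) x y.

Definition no_isolated G : Prop :=
  forall x, x \in gV G -> exists2 e, e \in gE G & x \in e.
End Graphs.

(* G_u ⋈ K_k: vertices V(G) + (k-1) new vertices; the new vertices together
   with u form a clique K_k. *)
Definition join_Kk (T : finType) (G : graph T) (u : T) (k : nat)
  : graph (T + 'I_k.-1)%type :=
  Graph
    ([set inl x | x in gV G] :|: [set inr i | i : 'I_k.-1])
    ([set [set (inl x : (T + 'I_k.-1)%type) | x in e] | e : {set T} in gE G]
     :|: [set [set (inr i : (T + 'I_k.-1)%type); inr j] | i in [set: 'I_k.-1], j in [set: 'I_k.-1] & i != j]
     :|: [set [set (inl u : (T + 'I_k.-1)%type); inr i] | i : 'I_k.-1]).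

From mathcomp Require Import all_boot zify.
Set Implicit Arguments. Unset Strict Implicit. Unset Printing Implicit Defensive.

(* G_u ⋈ K_k is the 1-sum of G and the clique K_k at the vertex u: transposing two
   colours on one side makes two colourings agree at u.  Hence, for every set F of deleted
   edges with G-part F_G and clique part F_K,
     chi (G_u ⋈ K_k - F) = max (chi (G - F_G)) (chi (K_k - F_K)).
   Since chi K_k = k and chi (K_k - e) = k - 1, deleting one edge never brings
   chi (G_u ⋈ K_k) = max (chi G) k below k, while deleting an edge e of G together with an
   edge of the clique gives max (chi (G - e)) (k - 1).  So G_u ⋈ K_k is (k,2)-critical
   exactly when chi G = k and chi (G - e) < k for every edge e of G, which for a graph
   without isolated vertices means that G is k-critical. *)

Section Colorings.
Variable S : finType.
Implicit Types (H K : graph S) (F : {set {set S}}).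

Definition edges_within H : Prop := forall e, e \in gE H -> e \subset gV H.

Definition nat_coloring H c (f : S -> nat) : Prop :=
  {in gV H, forall x, f x < c} /\
  forall e, e \in gE H -> {in e &, forall x y, x != y -> f x != f y}.

Definition nat_colorable H c : Prop := exists f, nat_coloring H c f.

Lemma wf_edges_within H : wf_graph H -> edges_within H.
Proof. by move=> wfH e /wfH[]. Qed.

Lemma edges_within_del H F : edges_within H -> edges_within (del_edges H F).
Proof. by move=> ewH e; rewrite inE => /andP[_ /ewH]. Qed.

Lemma nat_colorable_sub H K c d :
  gV H \subset gV K -> gE H \subset gE K -> c <= d ->
  nat_colorable K c -> nat_colorable H d.
Proof.
move=> sV sE le_cd [f [f_lt f_prop]]; exists f; split.
  by move=> x /(subsetP sV) /f_lt /leq_trans; apply.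
by move=> e /(subsetP sE); apply: f_prop.
Qed.

Lemma colorable_nat H c : colorable H c -> nat_colorable H c.
Proof.
case/existsP=> f /andP[/forall_inP f_lt /forall_inP f_prop].
exists (fun x => val (f x)); split=> [x /f_lt //|e /f_prop /forall_inP fe x y xe ye xy].
move: (fe x xe) => /forall_inP/(_ y ye)/implyP/(_ xy).
by apply: contra => /eqP/val_inj->.
Qed.

Lemma nat_colorable_colorable H c : edges_within H -> c <= #|S| ->
  nat_colorable H c -> colorable H c.
Proof.
move=> ewH le_cS [f [f_lt f_prop]].
have f_ltS x : x \in gV H -> f x < #|S|.+1 by move/f_lt; lia.
apply/existsP; exists [ffun x => inord (f x)]; apply/andP; split.
  by apply/forall_inP=> x xV; rewrite ffunE inordK ?f_lt ?f_ltS.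
apply/forall_inP=> e eE; apply/forall_inP=> x xe; apply/forall_inP=> y ye.
have [xV yV] := (subsetP (ewH e eE) x xe, subsetP (ewH e eE) y ye).
apply/implyP=> xy; rewrite !ffunE; apply: contra (f_prop e eE x y xe ye xy).
by move=> /eqP/(congr1 val); rewrite /= !inordK ?f_ltS // => ->.
Qed.

Lemma bigmin_le (I : eqType) (r : seq I) (P : pred I) (F : I -> nat) d i :
  i \in r -> P i -> \big[minn/d]_(j <- r | P j) F j <= F i.
Proof.
elim: r => // a r IH; rewrite inE big_cons => /orP[/eqP<-|ir] Pi.
  by rewrite Pi geq_minl.
by case: ifP => _; [rewrite geq_min IH ?orbT | exact: IH].
Qed.

Lemma colorable_card H : colorable H #|S|.
Proof.
apply/existsP; exists [ffun x => widen_ord (leqnSn _) (enum_rank x)].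
apply/andP; split; first by apply/forall_inP=> x _; rewrite ffunE /=.
apply/forall_inP=> e _; apply/forall_inP=> x _; apply/forall_inP=> y _.
apply/implyP; apply: contra; rewrite !ffunE => /eqP/(congr1 val) /=.
by move=> /val_inj/enum_rank_inj->.
Qed.

Lemma nat_colorable_chi H : nat_colorable H (chi H).
Proof.
apply: colorable_nat; rewrite /chi.
elim/big_ind: _ => //; first exact: colorable_card.
by move=> c d; rewrite /minn; case: ifP.
Qed.

Lemma chi_le_card H : chi H <= #|S|.
Proof.
rewrite /chi; elim/big_ind: _ => // [c d le_cS _|c _]; first by rewrite geq_min le_cS.
by rewrite -ltnS.
Qed.

Lemma chi_min H c : edges_within H -> nat_colorable H c -> chi H <= c.
Proof.
move=> ewH colH; case: (leqP #|S| c) => [/(leq_trans (chi_le_card H))//|lt_cS].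
have colHc := nat_colorable_colorable ewH (ltnW lt_cS) colH.
have c_ltS : c < #|S|.+1 by rewrite ltnS ltnW.
exact: (@bigmin_le _ _ _ _ _ (Ordinal c_ltS)) (mem_index_enum _) colHc.
Qed.

Lemma chi_subgraph H K : subgraph H K -> chi H <= chi K.
Proof.
case=> sV sE ewH; apply: chi_min ewH _.
exact: nat_colorable_sub sV sE (leqnn _) (nat_colorable_chi K).
Qed.

Lemma del_edges_subgraph H F : edges_within H -> subgraph (del_edges H F) H.
Proof. by move=> ewH; split=> //=; [apply: subsetDl | apply: edges_within_del]. Qed.

Lemma del_edges0 H : del_edges H set0 = H.
Proof. by case: H => V E; rewrite /del_edges setD0. Qed.

Lemma del_edgesU H F1 F2 :
  del_edges (del_edges H F1) F2 = del_edges H (F1 :|: F2).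
Proof. by rewrite /del_edges /= setDDl. Qed.

Lemma es_chi_le H F :
  F \subset gE H -> chi (del_edges H F) = (chi H).-1 -> es_chi H <= #|F|.
Proof.
move=> sFE chiF; apply: bigmin_le; first exact: mem_index_enum.
by rewrite powersetE sFE chiF eqxx.
Qed.

Lemma es_chi_ge2 H : 0 < chi H -> gE H != set0 ->
  (forall e, e \in gE H -> chi H <= chi (del_edges H [set e])) -> 1 < es_chi H.
Proof.
move=> chi_gt0 E_n0 chi_del1; rewrite /es_chi; elim/big_ind: _ => //.
- by rewrite ltnS card_gt0.
- by move=> c d; rewrite leq_min => -> ->.
move=> F /andP[]; rewrite powersetE => sFE /eqP chiF.
rewrite ltnNge; apply/negP => le_F1.
have [F0|[e Fe]] : F = set0 \/ exists e, F = [set e].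
  case: (posnP #|F|) => [/cards0_eq|F_gt0]; [by left | right].
  by apply/cards1P; rewrite eqn_leq le_F1.
  by move: chiF; rewrite F0 del_edges0; lia.
have eE : e \in gE H by rewrite (subsetP sFE) // Fe set11.
by have := chi_del1 e eE; rewrite -Fe chiF; lia.
Qed.

Lemma chi_criticalP k H : edges_within H -> no_isolated H ->
  chi_critical k H <->
  chi H = k /\ (forall e, e \in gE H -> chi (del_edges H [set e]) < k).
Proof.
move=> ewH noisoH; split=> -[chiH crit]; split=> //.
  move=> e eE; apply: crit (del_edges_subgraph _ ewH) _ => -[/setP/(_ e)].
  by rewrite in_setD set11 eE.
move=> K [sV sE ewK] neKH.
have [sHK|/subsetPn[e eH eK]] := boolP (gE H \subset gE K).
  have EK : gE K = gE H by apply/eqP; rewrite eqEsubset sE sHK.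
  case: neKH; congr pair => //; apply/eqP; rewrite eqEsubset sV.
  apply/subsetP=> x /noisoH[e eE xe].
  by apply: (subsetP (ewK e _)) xe; rewrite EK.
apply: leq_ltn_trans (crit e eH); apply: chi_subgraph; split=> //.
apply/subsetP=> f fK; rewrite in_setD in_set1 (subsetP sE f fK) andbT.
by apply: contraNneq eK => <-.
Qed.

End Colorings.

Section Complete.
Variable S : finType.
Implicit Types (H : graph S) (A : {set S}).

Definition complete A : graph S :=
  Graph A [set [set x; y] | x in A, y in A & x != y].

Lemma complete_edgeP A e :
  reflect (exists x y, [/\ x \in A, y \in A, x != y & e = [set x; y]])
          (e \in gE (complete A)).
Proof.
apply: (iffP imset2P).
  by case=> x y xA; rewrite inE => /andP[yA xy] ->; exists x, y.
by case=> x [y [xA yA xy ->]]; exists x y; rewrite ?inE ?yA.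
Qed.

Lemma complete_edge A x y :
  x \in A -> y \in A -> x != y -> [set x; y] \in gE (complete A).
Proof. by move=> xA yA xy; apply/complete_edgeP; exists x, y. Qed.

Lemma edges_within_complete A : edges_within (complete A).
Proof.
move=> e /complete_edgeP[x [y [xA yA _ ->]]].
by apply/subsetP=> z; rewrite in_set2 => /orP[]/eqP->.
Qed.

Lemma clique_card_le H A c : A \subset gV H ->
  {in A &, forall x y, x != y -> [set x; y] \in gE H} ->
  nat_colorable H c -> #|A| <= c.
Proof.
move=> sAV clqA [f [f_lt f_prop]].
have f_inj : {in A &, injective f}.
  move=> x y xA yA; apply: contra_eq => xy.
  by apply: (f_prop _ (clqA x y xA yA xy)); rewrite ?in_set2 ?eqxx ?orbT.
rewrite cardE -(size_map f) -[c](size_iota 0); apply: uniq_leq_size.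
  by rewrite map_inj_in_uniq ?enum_uniq // => x y; rewrite !mem_enum; apply: f_inj.
move=> z /mapP[x]; rewrite mem_enum => xA ->; rewrite mem_iota add0n.
exact: f_lt (subsetP sAV x xA).
Qed.

Lemma set2_eq (x y z t : S) :
  z \in [set x; y] -> t \in [set x; y] -> z != t -> [set z; t] = [set x; y].
Proof.
rewrite !in_set2 => /orP[]/eqP-> /orP[]/eqP->; rewrite ?eqxx //= => _.
by rewrite setUC.
Qed.

Lemma index_enum_lt A (B : {set S}) c (g : S -> S) :
  #|B| <= c -> {in A, forall x, g x \in B} ->
  {in A, forall x, index (g x) (enum B) < c}.
Proof.
by move=> le_Bc gB x /gB gxB; apply: leq_trans le_Bc; rewrite cardE index_mem mem_enum.
Qed.

Lemma chi_complete A : chi (complete A) = #|A|.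
Proof.
apply/eqP; rewrite eqn_leq; apply/andP; split.
  apply: chi_min; first exact: edges_within_complete.
  exists (fun x => index x (enum A)); split.
    by apply: (index_enum_lt (g := id)).
  move=> e /edges_within_complete/subsetP eA x y xe ye.
  by apply: contra => /eqP/index_inj-> //; rewrite mem_enum eA.
apply: clique_card_le (nat_colorable_chi _) => //=.
exact: complete_edge.
Qed.

Lemma chi_complete_del1 A e : e \in gE (complete A) ->
  chi (del_edges (complete A) [set e]) = #|A|.-1.
Proof.
case/complete_edgeP=> p [q [pA qA pq ->]].
have cardAq : #|A :\ q| = #|A|.-1 by rewrite (cardsD1 q A) qA.
have Aq x : x \in A -> x != q -> x \in A :\ q by rewrite !inE => -> ->.
apply/eqP; rewrite eqn_leq; apply/andP; split.
  apply: chi_min; first exact/edges_within_del/edges_within_complete.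
  pose g x := if x == q then p else x.
  have gAq : {in A, forall x, g x \in A :\ q}.
    by move=> x xA; rewrite /g; case: eqP => [_|/eqP]; apply: Aq; rewrite // eq_sym.
  exists (fun x => index (g x) (enum (A :\ q))); split.
    by apply: index_enum_lt; rewrite ?cardAq.
  move=> _ /setDP[/complete_edgeP[x [y [xA yA _ ->]]] ne_pq] z t zxy txy zt.
  have [zA tA] : z \in A /\ t \in A.
    by move: zxy txy; rewrite !in_set2 => /orP[]/eqP-> /orP[]/eqP->.
  apply: contra ne_pq => /eqP eq_idx.
  have : g z = g t by apply: index_inj eq_idx; rewrite ?mem_enum ?gAq.
  rewrite -(set2_eq zxy txy zt) /g in_set1.
  case: (z =P q) => [zq|zq]; case: (t =P q) => [tq|tq] gzt.
  - by rewrite zq tq eqxx in zt.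
  - by rewrite zq -gzt setUC eqxx.
  - by rewrite tq gzt eqxx.
  - by rewrite gzt eqxx in zt.
rewrite -cardAq; apply: clique_card_le (nat_colorable_chi _); first exact: subsetDl.
move=> x y /setD1P[xq xA] /setD1P[yq yA] xy /=.
rewrite !inE complete_edge //= andbT.
apply: contraNneq (_ : q \notin [set x; y]) => [->|]; first by rewrite set22.
by rewrite in_set2 negb_or !(eq_sym q) xq yq.
Qed.

End Complete.

Definition swapn (a b t : nat) : nat := if t == a then b else if t == b then a else t.

Lemma swapn_inj a b : injective (swapn a b).
Proof. by move=> s t; rewrite /swapn; repeat case: eqP => ?; lia. Qed.

Lemma swapn_lt a b c t : a < c -> b < c -> t < c -> swapn a b t < c.
Proof. by rewrite /swapn; repeat case: eqP => ?. Qed.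

Section Join.
Variables (T : finType) (G : graph T) (u : T) (k : nat).
Hypotheses (wfG : wf_graph G) (uV : u \in gV G).

Local Notation S := (T + 'I_k.-1)%type.
Local Notation G' := (join_Kk G u k).
Implicit Types (FG : {set {set T}}) (FK : {set {set S}}).

Definition lift_edge (e : {set T}) : {set S} := [set inl x | x in e].

Definition Kk : graph S := complete (inl u |: [set inr i | i : 'I_k.-1]).

Lemma lift_edge_inj : injective lift_edge.
Proof. exact/imset_inj/inl_inj. Qed.

Lemma join_Kk_edges : gE G' = lift_edge @: gE G :|: gE Kk.
Proof.
rewrite /= -setUA; congr (_ :|: _); apply/setP=> e; apply/idP/idP.
  rewrite inE => /orP[/imset2P[i j _]|/imsetP[i _ ->]].
    by rewrite inE => /andP[_ ij] ->; apply: complete_edge; rewrite ?inE ?imset_f ?orbT.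
  by apply: complete_edge; rewrite ?inE ?eqxx ?imset_f ?orbT.
case/complete_edgeP=> x [y []]; rewrite !inE.
move=> /orP[/eqP->|/imsetP[i _ ->]] /orP[/eqP->|/imsetP[j _ ->]];
  rewrite ?eqxx // => xy ->.
- by apply/orP; right; apply/imsetP; exists j.
- by apply/orP; right; apply/imsetP; exists i; rewrite // setUC.
- by apply/orP; left; apply/imset2P; exists i j; rewrite ?inE //=.
Qed.

Lemma lift_edge_notin_Kk e : lift_edge e \notin gE Kk.
Proof.
apply/negP=> /complete_edgeP[x [y [xK yK xy exy]]].
have lift_inl z : z \in lift_edge e -> z \in gV Kk -> z = inl u.
  by case/imsetP=> a _ ->; rewrite !inE => /orP[/eqP//|/imsetP[]].
have xu : x = inl u by apply: lift_inl; rewrite // exy set21.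
have yu : y = inl u by apply: lift_inl; rewrite // exy set22.
by rewrite xu yu eqxx in xy.
Qed.

Lemma Kk_vertices_sub : gV Kk \subset gV G'.
Proof.
apply/subsetP=> x; rewrite !inE => /orP[/eqP->|/imsetP[i _ ->]].
  by rewrite imset_f.
by rewrite imset_f ?orbT.
Qed.

Lemma edges_within_join : edges_within G'.
Proof.
move=> e; rewrite join_Kk_edges inE => /orP[/imsetP[e0 e0E ->]|eK].
  apply/subsetP=> _ /imsetP[x xe ->]; rewrite inE imset_f //.
  by have [_ /subsetP] := wfG e0E; apply.
exact: subset_trans (edges_within_complete eK) Kk_vertices_sub.
Qed.

Lemma join_colorable FG FK c : FK \subset gE Kk ->
  nat_colorable (del_edges G' (lift_edge @: FG :|: FK)) c <->
  nat_colorable (del_edges G FG) c /\ nat_colorable (del_edges Kk FK) c.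
Proof.
move=> sFK; split.
  case=> f [f_lt f_prop]; split.
    exists (fun x => f (inl x)); split=> [x xV|e /setDP[eE eF] x y xe ye xy].
      by apply: f_lt; rewrite !inE imset_f.
    have eE' : lift_edge e \in gE G' by rewrite join_Kk_edges inE imset_f.
    apply: (f_prop (lift_edge e)); rewrite ?imset_f ?(inj_eq inl_inj) //.
    rewrite in_setD eE' andbT in_setU negb_or (mem_imset _ _ lift_edge_inj) eF /=.
    by apply: contraNN (lift_edge_notin_Kk e); apply: (subsetP sFK).
  apply: nat_colorable_sub (ex_intro _ f (conj f_lt f_prop)) => //.
    exact: Kk_vertices_sub.
  apply/subsetP=> e /setDP[eK eF].
  rewrite in_setD join_Kk_edges !in_setU eK orbT andbT negb_or eF andbT.
  by apply/imsetP=> -[e0 _ ee0]; move: eK; rewrite ee0 (negbTE (lift_edge_notin_Kk e0)).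
case=> -[fG [fG_lt fG_prop]] [fK [fK_lt fK_prop]].
have uK : inl u \in gV Kk by rewrite !inE eqxx.
pose sw := swapn (fK (inl u)) (fG u).
pose h (x : S) := if x is inl y then fG y else sw (fK x).
have hK x : x \in gV Kk -> h x = sw (fK x).
  case: x => [y|i] //; rewrite !inE => /orP[/eqP->|/imsetP[]//].
  by rewrite /sw /swapn eqxx.
exists h; split.
  have iK i : inr i \in gV Kk by rewrite !inE imset_f ?orbT.
  case=> [y|i] yV /=; last by apply: swapn_lt; rewrite ?fK_lt ?fG_lt.
  by apply: fG_lt; move: yV; rewrite !inE => /orP[/imsetP[z zV [->]]|/imsetP[]].
move=> e; rewrite in_setD join_Kk_edges !in_setU negb_or.
case/andP=> /andP[eFG eFK] /orP[/imsetP[e0 e0E ee0]|eK] x y.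
  rewrite ee0 (mem_imset _ _ lift_edge_inj) in eFG *.
  case/imsetP=> a ae0 -> /imsetP[b be0 ->]; rewrite (inj_eq inl_inj) /=.
  by apply: (fG_prop e0) => //; rewrite in_setD e0E andbT.
have eV := subsetP (edges_within_complete eK).
move=> xe ye xy; rewrite !hK ?eV // (inj_eq (@swapn_inj _ _)).
by apply: (fK_prop e) => //; rewrite in_setD eK eFK.
Qed.

Lemma chi_join_del FG FK : FK \subset gE Kk ->
  chi (del_edges G' (lift_edge @: FG :|: FK)) =
  maxn (chi (del_edges G FG)) (chi (del_edges Kk FK)).
Proof.
move=> sFK; set F := _ :|: FK.
have ewG : edges_within (del_edges G FG) by apply/edges_within_del/wf_edges_within.
have ewK : edges_within (del_edges Kk FK) by apply/edges_within_del/edges_within_complete.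
have ewG' : edges_within (del_edges G' F) by apply/edges_within_del/edges_within_join.
have [colG colK] := (join_colorable FG (chi (del_edges G' F)) sFK).1 (nat_colorable_chi _).
apply/eqP; rewrite eqn_leq geq_max !chi_min //.
apply/(join_colorable _ _ sFK); split; apply: nat_colorable_sub (nat_colorable_chi _) => //.
  exact: leq_maxl.
exact: leq_maxr.
Qed.

Hypothesis k_gt1 : 1 < k.

Lemma card_Kk : #|gV Kk| = k.
Proof.
rewrite cardsU1 card_imset; last exact: inr_inj.
by rewrite card_ord (_ : inl u \notin _) //=; [lia | apply/imsetP=> -[]].
Qed.

Lemma chi_join_delG FG :
  chi (del_edges G' (lift_edge @: FG)) = maxn (chi (del_edges G FG)) k.
Proof.
by rewrite -[_ @: FG]setU0 chi_join_del ?sub0set // del_edges0 chi_complete card_Kk.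
Qed.

Lemma chi_join_delGK FG eK : eK \in gE Kk ->
  chi (del_edges G' (lift_edge @: FG :|: [set eK])) = maxn (chi (del_edges G FG)) k.-1.
Proof.
by move=> eK_Kk; rewrite chi_join_del ?sub1set // chi_complete_del1 // card_Kk.
Qed.

Lemma chi_join : chi G' = maxn (chi G) k.
Proof. by have := chi_join_delG set0; rewrite imset0 !del_edges0. Qed.

Lemma Kk_edges_n0 : gE Kk != set0.
Proof.
have i0 : 'I_k.-1 by exists 0; lia.
apply/set0Pn; exists [set inl u; inr i0].
by apply: complete_edge; rewrite ?inE ?eqxx ?imset_f ?orbT.
Qed.

Lemma join_k2_critical : chi G = k ->
  (forall e, e \in gE G -> chi (del_edges G [set e]) < k) -> gE G != set0 ->
  k2_critical k G'.
Proof.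
move=> chiG crit /set0Pn[e0 e0E]; have /set0Pn[eK0 eK0K] := Kk_edges_n0.
have chiG' : chi G' = k by rewrite chi_join chiG maxnn.
have chi_del1 e' : e' \in gE G' -> chi (del_edges G' [set e']) = k.
  rewrite join_Kk_edges inE => /orP[/imsetP[e eE ->]|eK].
    by rewrite -imset_set1 chi_join_delG; apply/maxn_idPr/ltnW/crit.
  rewrite -[[set e']]set0U -(imset0 lift_edge) chi_join_delGK // del_edges0 chiG.
  exact/maxn_idPl/leq_pred.
have partner e' : e' \in gE G' ->
    exists2 e'', e'' \in gE G' :\: [set e'] & chi (del_edges G' [set e'; e'']) = k.-1.
  have chi_pair e eK : e \in gE G -> eK \in gE Kk ->
      chi (del_edges G' [set lift_edge e; eK]) = k.-1.
    move=> eE eKK; rewrite -imset_set1 chi_join_delGK //.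
    by apply/maxn_idPr; have := crit e eE; lia.
  have lift_neq e eK : eK \in gE Kk -> (eK \in [set lift_edge e]) = false.
    by move=> eKK; rewrite in_set1; apply: contraNF (lift_edge_notin_Kk e) => /eqP<-.
  rewrite join_Kk_edges inE => /orP[/imsetP[e eE ->]|eK].
    exists eK0; last exact: chi_pair.
    by rewrite in_setD lift_neq // in_setU eK0K orbT.
  exists (lift_edge e0); last by rewrite setUC chi_pair.
  rewrite in_setD in_setU imset_f // in_set1 andbT.
  by apply: contraNneq (lift_edge_notin_Kk e0) => ->.
have es2 : es_chi G' = 2.
  apply/eqP; rewrite eqn_leq; apply/andP; split.
    have e0E' : lift_edge e0 \in gE G' by rewrite join_Kk_edges in_setU imset_f.
    have [e'' /setD1P[ne e''E] chi2] := partner _ e0E'.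
    apply: (@leq_trans #|[set lift_edge e0; e'']|); last by rewrite cards2 eq_sym ne.
    apply: es_chi_le; last by rewrite chi2 chiG'.
    by apply/subsetP=> f; rewrite in_set2 => /orP[]/eqP->.
  apply: es_chi_ge2 => [|//|e' /chi_del1->]; first by rewrite chiG'; lia.
    by apply/set0Pn; exists (lift_edge e0); rewrite join_Kk_edges in_setU imset_f.
  by rewrite chiG'.
split=> // e' e'E; rewrite es2.
have [e'' e''E chi2] := partner e' e'E.
apply: (@leq_ltn_trans #|[set e'']|); last by rewrite cards1.
by apply: es_chi_le; rewrite ?sub1set // del_edgesU chi2 chi_del1.
Qed.

Lemma k2_critical_join : k2_critical k G' ->
  chi G = k /\ forall e, e \in gE G -> chi (del_edges G [set e]) < k.
Proof.
case=> es_crit chiG' es2; have /set0Pn[eK0 eK0K] := Kk_edges_n0.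
have eK0E' : eK0 \in gE G' by rewrite join_Kk_edges in_setU eK0K orbT.
have chiG : chi G = k.
  apply/eqP; rewrite eqn_leq -{1}chiG' chi_join leq_maxl leqNgt /=.
  apply/negP=> ltGk.
  have chi_del : chi (del_edges G' [set eK0]) = (chi G').-1.
    rewrite -[[set eK0]]set0U -(imset0 lift_edge) chi_join_delGK // del_edges0 chiG'.
    by apply/maxn_idPr; lia.
  have : es_chi G' <= #|[set eK0]| by apply: es_chi_le chi_del; rewrite sub1set.
  by rewrite es2 cards1.
split=> // e eE; rewrite ltnNge; apply/negP=> chiGe_ge.
have chiGe : chi (del_edges G [set e]) = k.
  apply/eqP; rewrite eqn_leq chiGe_ge andbT -{1}chiG.
  exact/chi_subgraph/del_edges_subgraph/wf_edges_within.
set H := del_edges G' [set lift_edge e].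
have chiH : chi H = k by rewrite /H -imset_set1 chi_join_delG chiGe maxnn.
have : es_chi H < 2 by rewrite -es2; apply: es_crit; rewrite join_Kk_edges in_setU imset_f.
rewrite ltnNge => /negP; apply; apply: es_chi_ge2; first by rewrite chiH; lia.
  apply/set0Pn; exists eK0; rewrite in_setD eK0E' andbT in_set1.
  by apply: contraNneq (lift_edge_notin_Kk e) => <-.
move=> f /setD1P[_]; rewrite del_edgesU chiH join_Kk_edges in_setU.
case/orP=> [/imsetP[e2 _ ->]|fK].
  by rewrite -!imset_set1 -imsetU chi_join_delG leq_maxr.
by rewrite -imset_set1 chi_join_delGK // chiGe leq_maxl.
Qed.

End Join.

Theorem theorem3p1 (T : finType) (G : graph T) (u : T) (k : nat) :
  3 <= k -> wf_graph G -> connected G -> no_isolated G -> u \in gV G ->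
  (chi_critical k G <-> k2_critical k (join_Kk G u k)).
Proof.
move=> k_ge3 wfG _ noisoG uV; have k_gt1 : 1 < k by lia.
rewrite chi_criticalP //; last exact: wf_edges_within.
split; last exact: k2_critical_join.
case=> chiG crit; apply: join_k2_critical => //.
by have [e eE _] := noisoG u uV; apply/set0Pn; exists e.
Qed.
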